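(* $\mathcal D_{(11,0,1)}$ is a variety biregular to $\mathbb P^2\times\mathbb P^1$; in particular it is irreducible and smooth. The same holds for $\mathcal D_{(1,0,11)}$.
   Context: $\mathbb P^7$ is the projective space of nonzero polynomials $\sum_{0\le i,j\le2,(i,j)\ne(2,2)}a_{ij}z^iw^j$ up to scalars. $\mathcal D_{(11,0,1)}\subset\mathbb P^7$ is the set of classes of nonzero cubics $(a_1z+c_1)(a_2z+c_2)(b_3w+c_3)$, and $\mathcal D_{(1,0,11)}\subset\mathbb P^7$ the set of classes of nonzero cubics $(a_1z+c_1)(b_2w+c_2)(b_3w+c_3)$ (complex parameters). *)

From HB Require Import structures.
From mathcomp Require Import all_boot all_algebra.
From mathcomp Require Import complex reals.
From mathcomp Require Import mpoly.
Set Implicit Arguments. Unset Strict Implicit. Unset Printing Implicit Defensive.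
Import GRing.Theory.
Local Open Scope ring_scope.

Section ProjectiveGeometry.
Variable F : fieldType.

(* Homogeneous coordinates: a point of P^n is represented by a vector
   v : 'I_n.+1 -> F which is nonzero; two representatives define the same
   point iff they are proportional. *)
Definition nonzero_vec (n : nat) (v : 'I_n -> F) : Prop := exists i, v i != 0.

Definition proj_eq (n : nat) (v w : 'I_n -> F) : Prop :=
  exists2 l : F, l != 0 & forall i, w i = l * v i.

Definition homog_poly (n : nat) (d : nat) (p : {mpoly F[n]}) : bool :=
  p \is d.-homog.

Definition proj_closed (n : nat) (X : ('I_n.+1 -> F) -> Prop) : Prop :=
  exists s : seq {mpoly F[n.+1]},
    (forall p, p \in s -> exists d, homog_poly d p) /\
    forall v, nonzero_vec v -> (X v <-> forall p, p \in s -> p.@[v] = 0).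

Definition regular_from_proj (n m : nat) (X : ('I_n.+1 -> F) -> Prop)
    (f : ('I_n.+1 -> F) -> ('I_m.+1 -> F)) : Prop :=
  forall x, nonzero_vec x -> X x ->
    exists d : nat, exists g : 'I_m.+1 -> {mpoly F[n.+1]},
      (forall k, homog_poly d (g k)) /\
      nonzero_vec (fun k => (g k).@[x]) /\
      forall y, nonzero_vec y -> X y -> nonzero_vec (fun k => (g k).@[y]) ->
        proj_eq (f y) (fun k => (g k).@[y]).

(* P^2 x P^1: pairs of representatives; bihomogeneous polynomials are
   polynomials in 5 variables, the first 3 being coordinates on P^2 and the
   last 2 coordinates on P^1. *)
Definition concat32 (x : 'I_3 -> F) (y : 'I_2 -> F) : 'I_5 -> F :=
  fun i => match @split 3 2 i with inl j => x j | inr j => y j end.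

Definition bihomog_poly (a b : nat) (p : {mpoly F[5]}) : Prop :=
  forall m : 'X_{1..5}, m \in msupp p ->
    (\sum_(i < 5 | (i < 3)%N) m i)%N = a /\ (\sum_(i < 5 | (3 <= i)%N) m i)%N = b.

Definition regular_from_P2P1 (m : nat)
    (f : ('I_3 -> F) -> ('I_2 -> F) -> ('I_m.+1 -> F)) : Prop :=
  forall x y, nonzero_vec x -> nonzero_vec y ->
    exists a b : nat, exists g : 'I_m.+1 -> {mpoly F[5]},
      (forall k, bihomog_poly a b (g k)) /\
      nonzero_vec (fun k => (g k).@[concat32 x y]) /\
      forall x' y', nonzero_vec x' -> nonzero_vec y' ->
        nonzero_vec (fun k => (g k).@[concat32 x' y']) ->
        proj_eq (f x' y') (fun k => (g k).@[concat32 x' y']).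

Definition biregular_to_P2P1 (n : nat) (X : ('I_n.+1 -> F) -> Prop) : Prop :=
  proj_closed X /\
  exists (phi : ('I_3 -> F) -> ('I_2 -> F) -> ('I_n.+1 -> F))
         (psi1 : ('I_n.+1 -> F) -> ('I_3 -> F))
         (psi2 : ('I_n.+1 -> F) -> ('I_2 -> F)),
    [/\ regular_from_P2P1 phi,
        regular_from_proj X psi1,
        regular_from_proj X psi2,
        (forall x y, nonzero_vec x -> nonzero_vec y ->
           X (phi x y) /\ proj_eq (psi1 (phi x y)) x /\ proj_eq (psi2 (phi x y)) y)
      & (forall v, nonzero_vec v -> X v -> proj_eq (phi (psi1 v) (psi2 v)) v)].

(* P^7: classes of nonzero polynomials sum_{0<=i,j<=2, (i,j)<>(2,2)} a_ij z^i w^j.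
   Coordinate k : 'I_8 is the coefficient a_ij of z^i w^j with i = k %/ 3,
   j = k %% 3, i.e. the order (0,0),(0,1),(0,2),(1,0),(1,1),(1,2),(2,0),(2,1). *)
Definition zw_monom (k : 'I_8) : 'X_{1..2} :=
  [multinom (if (i == 0 :> nat) then (k %/ 3)%N else (k %% 3)%N) | i < 2].

Definition coef_vec (p : {mpoly F[2]}) : 'I_8 -> F := fun k => p@_(zw_monom k).

Definition Z : {mpoly F[2]} := 'X_(ord0 : 'I_2).
Definition W : {mpoly F[2]} := 'X_(ord_max : 'I_2).

Definition D_11_0_1 (v : 'I_8 -> F) : Prop :=
  exists a1 c1 a2 c2 b3 c3 : F,
    let p := (a1 *: Z + c1%:MP) * (a2 *: Z + c2%:MP) * (b3 *: W + c3%:MP) in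
    p != 0 /\ proj_eq (coef_vec p) v.

Definition D_1_0_11 (v : 'I_8 -> F) : Prop :=
  exists a1 c1 b2 c2 b3 c3 : F,
    let p := (a1 *: Z + c1%:MP) * (b2 *: W + c2%:MP) * (b3 *: W + c3%:MP) in
    p != 0 /\ proj_eq (coef_vec p) v.

End ProjectiveGeometry.

From HB Require Import structures.
From mathcomp Require Import all_boot all_algebra.
From mathcomp Require Import complex reals.
From mathcomp Require Import mpoly.
From mathcomp Require Import ring zify.
Set Implicit Arguments. Unset Strict Implicit. Unset Printing Implicit Defensive.
Import GRing.Theory.
Local Open Scope ring_scope.

(* Over an algebraically closed field every binary quadratic splits into
   linear factors, so D_(11,0,1) is the set of classes of products q(z) l(w)
   with deg q <= 2 and deg l <= 1.  In coefficients the cubic q(z) l(w) is the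
   3x2 matrix (q_i l_j) placed in six coordinates of P^7, the other two being
   zero: D_(11,0,1) is the image of the Segre embedding of P^2 x P^1.  It is
   cut out by those two coordinates and the 2x2 minors of the matrix, and q and
   l are recovered, up to scalars, as a nonzero column and a nonzero row.
   D_(1,0,11) is the same with z and w exchanged. *)

Section ProjectiveEquivalence.
Variables (F : fieldType) (n : nat).
Implicit Types v w u : 'I_n -> F.

Lemma eqfun_proj_eq v w : v =1 w -> proj_eq v w.
Proof. by move=> vw; exists 1; rewrite ?oner_neq0 // => i; rewrite mul1r vw. Qed.

Lemma proj_eq_sym v w : proj_eq v w -> proj_eq w v.
Proof.
case=> l l_neq0 wl; exists l^-1; first by rewrite invr_neq0.
by move=> i; rewrite wl mulKf.
Qed.

Lemma proj_eq_trans u v w : proj_eq u v -> proj_eq v w -> proj_eq u w.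
Proof.
case=> l l_neq0 vl [l' l'_neq0 wl']; exists (l' * l); first by rewrite mulf_neq0.
by move=> i; rewrite wl' vl mulrA.
Qed.

End ProjectiveEquivalence.

Lemma rank_one_factor (F : fieldType) (I J : Type) (A : I -> J -> F) i0 j0 :
  A i0 j0 != 0 -> (forall i i' j j', A i j * A i' j' = A i j' * A i' j) ->
  forall i j, A i j = A i j0 * (A i0 j / A i0 j0).
Proof.
move=> A00 minors i j; apply: (mulIf A00).
by rewrite minors -mulrA divfK.
Qed.

Section CoordinateLines.
Variables (F : fieldType) (N p r : nat) (c : 'I_p.+1 -> 'I_r.+1 -> 'I_N.+1).
Implicit Types v : 'I_N.+1 -> F.

Definition line_factors v (w : 'I_p.+1 -> F) (u : 'I_r.+1 -> F) : Prop :=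
  forall t i, v (c t i) = w t * u i.

Definition pick_line v : 'I_r.+1 -> F :=
  let t := odflt ord0 [pick t | [exists i, v (c t i) != 0]] in fun i => v (c t i).

Lemma proj_eq_line v w u t : line_factors v w u -> (exists i, v (c t i) != 0) ->
  proj_eq u (fun i => v (c t i)).
Proof.
move=> vwu [i vti_neq0]; exists (w t); last by move=> j; rewrite vwu.
by apply: contraNneq vti_neq0 => wt0; rewrite vwu wt0 mul0r.
Qed.

Lemma proj_eq_pick_line v w u : line_factors v w u -> (exists t i, v (c t i) != 0) ->
  proj_eq u (pick_line v).
Proof.
move=> vwu [t0 [i0 vti0_neq0]]; rewrite /pick_line.
case: pickP => [t /existsP | none]; first exact: proj_eq_line.
by case/negP: (negbT (none t0)); apply/existsP; exists i0.
Qed.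

Lemma regular_pick_line X :
  (forall v, nonzero_vec v -> X v ->
     exists w u, line_factors v w u /\ exists t i, v (c t i) != 0) ->
  regular_from_proj X pick_line.
Proof.
move=> Xfactors x x_neq0 Xx; have [_ [_ [_ [t0 [i0 xti0_neq0]]]]] := Xfactors x x_neq0 Xx.
exists 1%N, (fun i => 'X_(c t0 i)); split; [|split].
- by move=> i; rewrite /homog_poly dhomogX; apply/eqP; apply: mdeg1.
- by exists i0; rewrite mevalXU.
move=> y y_neq0 Xy [i yti_neq0]; rewrite mevalXU in yti_neq0.
have [w [u [ywu y_line]]] := Xfactors y y_neq0 Xy.
apply: proj_eq_trans (proj_eq_sym (proj_eq_pick_line ywu y_line)) _.
apply: proj_eq_trans (proj_eq_line ywu (ex_intro _ i yti_neq0)) _.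
by apply: eqfun_proj_eq => j; rewrite mevalXU.
Qed.

End CoordinateLines.

Definition segre (R : nzRingType) (I J K : finType) (e : I * J -> K)
    (x : I -> R) (y : J -> R) : K -> R :=
  fun k => if [pick p | e p == k] is Some p then x p.1 * y p.2 else 0.

Section Segre.
Variables (R : nzRingType) (I J K : finType) (e : I * J -> K).
Hypothesis e_inj : injective e.
Implicit Types (x : I -> R) (y : J -> R).

Lemma segreE x y p : segre e x y (e p) = x p.1 * y p.2.
Proof.
by rewrite /segre; case: pickP => [q /eqP/e_inj -> | /(_ p)] //; rewrite eqxx.
Qed.

Lemma segre_out x y k : k \notin codom e -> segre e x y k = 0.
Proof.
by rewrite /segre; case: pickP => // p /eqP <-; rewrite codom_f.
Qed.

Lemma eq_segre x x' y y' : x =1 x' -> y =1 y' -> segre e x y =1 segre e x' y'.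
Proof. by move=> xx' yy' k; rewrite /segre; case: pickP => // p _; rewrite xx' yy'. Qed.

Lemma segre_nonzero_entry x y k : segre e x y k != 0 -> exists p, k = e p.
Proof. by rewrite /segre; case: pickP => [p /eqP <- _|_]; [exists p | rewrite eqxx]. Qed.

End Segre.

Lemma segre_scale (R : comNzRingType) (I J K : finType) (e : I * J -> K) a b x y :
  segre e (fun i => a * x i) (fun j => b * y j) =1 (fun k => a * b * segre e x y k : R).
Proof.
by move=> k; rewrite /segre; case: pickP => [p _|_]; rewrite ?mulr0 // mulrACA.
Qed.

Lemma proj_eq_segre (F : fieldType) m n N (e : 'I_m * 'I_n -> 'I_N)
    (x x' : 'I_m -> F) (y y' : 'I_n -> F) :
  proj_eq x x' -> proj_eq y y' -> proj_eq (segre e x y) (segre e x' y').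
Proof.
case=> a a_neq0 x'a [b b_neq0 y'b]; exists (a * b); first by rewrite mulf_neq0.
by move=> k; rewrite (eq_segre _ x'a y'b) segre_scale.
Qed.

Lemma meval_segre (R : comNzRingType) (I J : finType) r N (e : I * J -> 'I_N)
    (x : I -> {mpoly R[r]}) (y : J -> {mpoly R[r]}) v k :
  (segre e x y k).@[v] = segre e (fun i => (x i).@[v]) (fun j => (y j).@[v]) k.
Proof. by rewrite /segre; case: pickP => [p _|_]; rewrite ?mevalM ?meval0. Qed.

Section SegreVariety.
Variables (F : fieldType) (m n N : nat) (e : 'I_m.+1 * 'I_n.+1 -> 'I_N.+1).
Hypothesis e_inj : injective e.
Implicit Types v : 'I_N.+1 -> F.

Definition segre_image v : Prop := exists x y, v =1 segre e x y.

Definition segre_minor (p q : 'I_m.+1 * 'I_n.+1) : {mpoly F[N.+1]} :=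
  'X_(e p) * 'X_(e q) - 'X_(e (p.1, q.2)) * 'X_(e (q.1, p.2)).

Definition segre_equations : seq {mpoly F[N.+1]} :=
  [seq 'X_k | k <- enum 'I_N.+1 & k \notin codom e] ++
  [seq segre_minor p q | p <- enum {: 'I_m.+1 * 'I_n.+1}, q <- enum {: 'I_m.+1 * 'I_n.+1}].

Lemma segre_equations_homog P : P \in segre_equations -> exists d, homog_poly d P.
Proof.
have X_homog k : ('X_k : {mpoly F[N.+1]}) \is 1.-homog.
  by rewrite dhomogX; apply/eqP; apply: mdeg1.
rewrite mem_cat => /orP[/mapP[k _ ->] | /allpairsP[[p q] [_ _ ->]]].
  by exists 1%N; apply: X_homog.
by exists 2%N; apply: rpredB; exact: (dhomogM (X_homog _) (X_homog _)).
Qed.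

Lemma segre_imageP v : nonzero_vec v ->
  segre_image v <-> forall P, P \in segre_equations -> P.@[v] = 0.
Proof.
move=> [k0 vk0_neq0]; split.
  case=> x [y vxy] P; rewrite mem_cat => /orP[/mapP[k] | /allpairsP[[p q] [_ _ ->]]].
    by rewrite mem_filter => /andP[k_out _] ->; rewrite mevalXU vxy segre_out.
  by rewrite mevalB !mevalM !mevalXU !vxy !(segreE e_inj) /=; ring.
move=> v_eqs.
have v_out k : k \notin codom e -> v k = 0.
  move=> k_out; rewrite -(mevalXU v k); apply: v_eqs.
  rewrite mem_cat; apply/orP; left; apply/mapP; exists k => //.
  by rewrite mem_filter /= k_out mem_enum.
have /codomP[[i0 j0] k0E] : k0 \in codom e.
  by apply: contraNT vk0_neq0 => /v_out ->.
pose A i j := v (e (i, j)).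
have A_minors i i' j j' : A i j * A i' j' = A i j' * A i' j.
  apply/eqP; rewrite -subr_eq0; apply/eqP.
  have <- : (segre_minor (i, j) (i', j')).@[v] = A i j * A i' j' - A i j' * A i' j.
    by rewrite mevalB !mevalM !mevalXU.
  apply/v_eqs; rewrite mem_cat; apply/orP; right.
  by apply/allpairsP; exists ((i, j), (i', j')); rewrite !mem_enum.
have A00_neq0 : A i0 j0 != 0 by rewrite /A -k0E.
exists (fun i => A i j0), (fun j => A i0 j / A i0 j0) => k.
have [/codomP[[i j] ->] | k_out] := boolP (k \in codom e); last by rewrite v_out ?segre_out.
by rewrite (segreE e_inj) /= -(rank_one_factor A00_neq0 A_minors).
Qed.

Lemma segre_nonzero_line v x y : nonzero_vec v -> v =1 segre e x y ->
  exists i j, v (e (i, j)) != 0.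
Proof.
case=> k vk_neq0 vxy; rewrite vxy in vk_neq0.
have [[i j] kE] := segre_nonzero_entry vk_neq0.
by exists i, j; rewrite -kE vxy.
Qed.

Definition segre_fst : ('I_N.+1 -> F) -> 'I_m.+1 -> F := pick_line (fun t i => e (i, t)).
Definition segre_snd : ('I_N.+1 -> F) -> 'I_n.+1 -> F := pick_line (fun t j => e (t, j)).

Lemma segre_col_factors v x y : v =1 segre e x y -> line_factors (fun t i => e (i, t)) v y x.
Proof. by move=> vxy t i; rewrite vxy (segreE e_inj) mulrC. Qed.

Lemma segre_row_factors v x y : v =1 segre e x y -> line_factors (fun t j => e (t, j)) v x y.
Proof. by move=> vxy t j; rewrite vxy (segreE e_inj). Qed.

Lemma segre_nonzero_col v x y : nonzero_vec v -> v =1 segre e x y ->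
  exists j i, v (e (i, j)) != 0.
Proof. by move=> v_neq0 /(segre_nonzero_line v_neq0)[i [j vij]]; exists j, i. Qed.

Lemma proj_eq_segre_fst v x y : nonzero_vec v -> v =1 segre e x y -> proj_eq x (segre_fst v).
Proof.
move=> v_neq0 vxy.
exact: proj_eq_pick_line (segre_col_factors vxy) (segre_nonzero_col v_neq0 vxy).
Qed.

Lemma proj_eq_segre_snd v x y : nonzero_vec v -> v =1 segre e x y -> proj_eq y (segre_snd v).
Proof.
move=> v_neq0 vxy.
exact: proj_eq_pick_line (segre_row_factors vxy) (segre_nonzero_line v_neq0 vxy).
Qed.

Variable X : ('I_N.+1 -> F) -> Prop.
Hypothesis X_segre : forall v, nonzero_vec v -> X v <-> segre_image v.

Lemma proj_closed_segre : proj_closed X.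
Proof.
exists segre_equations; split; first exact: segre_equations_homog.
by move=> v v_neq0; rewrite X_segre // segre_imageP.
Qed.

Lemma regular_segre_fst : regular_from_proj X segre_fst.
Proof.
apply: regular_pick_line => v v_neq0 /(X_segre v_neq0)[x [y vxy]].
by exists y, x; split; [exact: segre_col_factors | exact: segre_nonzero_col].
Qed.

Lemma regular_segre_snd : regular_from_proj X segre_snd.
Proof.
apply: regular_pick_line => v v_neq0 /(X_segre v_neq0)[x [y vxy]].
by exists x, y; split; [exact: segre_row_factors | exact: segre_nonzero_line].
Qed.

End SegreVariety.

Lemma sum_mnm1 n (a : 'I_n) (P : pred 'I_n) : (\sum_(i < n | P i) U_(a)%MM i)%N = P a.
Proof.
rewrite big_mkcond (bigD1 a) //= mnm1E eqxx big1 ?addn0; first by case: (P a).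
by move=> i /negbTE a_neq_i; rewrite mnm1E eq_sym a_neq_i; case: (P i).
Qed.

Section SegreOfP2P1.
Variable F : fieldType.

Lemma concat32_lshift (x : 'I_3 -> F) y (i : 'I_3) : concat32 x y (lshift 2 i) = x i.
Proof. by rewrite /concat32 -[lshift 2 i]/(unsplit (inl i)) unsplitK. Qed.

Lemma concat32_rshift (x : 'I_3 -> F) y (j : 'I_2) : concat32 x y (rshift 3 j) = y j.
Proof. by rewrite /concat32 -[rshift 3 j]/(unsplit (inr j)) unsplitK. Qed.

Lemma bihomog_X_lshift_rshift (i : 'I_3) (j : 'I_2) :
  bihomog_poly 1 1 ('X_(lshift 2 i) * 'X_(rshift 3 j) : {mpoly F[5]}).
Proof.
move=> mon; rewrite -mpolyXD msuppX inE => /eqP ->.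
rewrite !(eq_bigr _ (fun k _ => mnmDE k _ _)) !big_split /= !sum_mnm1 /=.
by rewrite ltn_ord leqNgt ltn_ord.
Qed.

Variables (N : nat) (e : 'I_3 * 'I_2 -> 'I_N.+1).
Hypothesis e_inj : injective e.

Lemma regular_segre :
  regular_from_P2P1 (segre e : ('I_3 -> F) -> ('I_2 -> F) -> 'I_N.+1 -> F).
Proof.
pose g : 'I_N.+1 -> {mpoly F[5]} :=
  segre e (fun i => 'X_(lshift 2 i)) (fun j => 'X_(rshift 3 j)).
have gE x y k : (g k).@[concat32 x y] = segre e x y k.
  rewrite meval_segre; apply: eq_segre => [i|j]; rewrite mevalXU.
    exact: concat32_lshift.
  exact: concat32_rshift.
move=> x y [i xi_neq0] [j yj_neq0]; exists 1%N, 1%N, g; split; [|split].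
- move=> k; rewrite /g /segre; case: pickP => [p _|_].
    exact: bihomog_X_lshift_rshift.
  by move=> mon; rewrite -[0]/(0%:MP) msupp0.
- by exists (e (i, j)); rewrite gE (segreE e_inj) mulf_neq0.
- by move=> x' y' _ _ _; apply: eqfun_proj_eq => k; rewrite gE.
Qed.

Variable X : ('I_N.+1 -> F) -> Prop.
Hypothesis X_segre : forall v, nonzero_vec v -> X v <-> segre_image e v.

Lemma biregular_segre : biregular_to_P2P1 X.
Proof.
split; first exact: proj_closed_segre X_segre.
exists (segre e), (segre_fst e), (segre_snd e); split.
- exact: regular_segre.
- exact: regular_segre_fst X_segre.
- exact: regular_segre_snd X_segre.
- move=> x y [i xi_neq0] [j yj_neq0].
  have xy_neq0 : nonzero_vec (segre e x y).
    by exists (e (i, j)); rewrite (segreE e_inj) mulf_neq0.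
  split; first by apply/X_segre => //; exists x, y.
  split; apply: proj_eq_sym.
    exact: proj_eq_segre_fst xy_neq0 _.
  exact: proj_eq_segre_snd xy_neq0 _.
- move=> v v_neq0 /(X_segre v_neq0)[x [y vxy]].
  apply: proj_eq_trans (proj_eq_sym (eqfun_proj_eq vxy)).
  apply: proj_eq_sym; apply: proj_eq_segre.
    exact: proj_eq_segre_fst v_neq0 vxy.
  exact: proj_eq_segre_snd v_neq0 vxy.
Qed.

End SegreOfP2P1.

Section BinaryCubics.
Variable F : fieldType.
Local Notation Z := (Z F).
Local Notation W := (W F).

Lemma X_zw_monom (k : 'I_8) : 'X_[zw_monom k] = Z ^+ (k %/ 3) * W ^+ (k %% 3).
Proof.
rewrite /Z /W !mpolyXn -mpolyXD; congr 'X_[_]; apply/mnmP => i.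
rewrite mnmDE !mulmnE !mnm1E mnmE.
by case: i => [[|[|//]] ?] /=; rewrite ?mul1n ?mul0n ?addn0 ?add0n ?muln1.
Qed.

Lemma zw_monom_inj : injective zw_monom.
Proof.
move=> k k' kk'.
have := congr1 (fun mon : 'X_{1..2} => mon ord0) kk'.
have := congr1 (fun mon : 'X_{1..2} => mon ord_max) kk'.
rewrite /= !mnmE /= => mod_kk' div_kk'.
by apply: val_inj; rewrite /= (divn_eq k 3) (divn_eq k' 3) mod_kk' div_kk'.
Qed.

Lemma coef_vec_segre m n (e : 'I_m * 'I_n -> 'I_8) (x : 'I_m -> F) (y : 'I_n -> F) :
  injective e -> coef_vec (\sum_p (x p.1 * y p.2) *: 'X_[zw_monom (e p)]) =1 segre e x y.
Proof.
move=> e_inj k; rewrite /coef_vec raddf_sum /=.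
under eq_bigr do rewrite mcoeffZ mcoeffX (inj_eq zw_monom_inj).
rewrite /segre; case: pickP => [p /eqP ep | none]; last first.
  by rewrite big1 // => p _; rewrite none mulr0.
rewrite (bigD1 p) //= ep eqxx mulr1 big1 ?addr0 // => q q_neq_p.
by rewrite -ep (inj_eq e_inj) (negbTE q_neq_p) mulr0.
Qed.

Lemma mul_sum_powers (A B : {mpoly F[2]}) m n (x : 'I_m -> F) (y : 'I_n -> F) :
  (\sum_i x i *: A ^+ i) * (\sum_j y j *: B ^+ j) =
  \sum_(p : 'I_m * 'I_n) (x p.1 * y p.2) *: (A ^+ p.1 * B ^+ p.2).
Proof.
rewrite mulr_suml; under eq_bigr do rewrite mulr_sumr; rewrite pair_bigA.
by apply: eq_bigr => -[i j] _; rewrite -scalerAl -scalerAr scalerA.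
Qed.

Definition lin_coefs (a c : F) : 'I_2 -> F := fun j => [:: c; a]`_j.

Definition quad_coefs (a1 c1 a2 c2 : F) : 'I_3 -> F :=
  fun i => [:: c1 * c2; a1 * c2 + c1 * a2; a1 * a2]`_i.

Lemma lin_expand (T : {mpoly F[2]}) a c :
  a *: T + c%:MP = \sum_(j < 2) lin_coefs a c j *: T ^+ j.
Proof. by rewrite !big_ord_recr big_ord0 /lin_coefs /= -!mul_mpolyC; ring. Qed.

Lemma quad_expand (T : {mpoly F[2]}) a1 c1 a2 c2 :
  (a1 *: T + c1%:MP) * (a2 *: T + c2%:MP) = \sum_(i < 3) quad_coefs a1 c1 a2 c2 i *: T ^+ i.
Proof. by rewrite !big_ord_recr big_ord0 /quad_coefs /= -!mul_mpolyC; ring. Qed.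

Lemma lin_coefsE (y : 'I_2 -> F) : lin_coefs (y ord_max) (y ord0) =1 y.
Proof. by case=> [[|[|//]] ?]; congr y; apply: val_inj. Qed.

(* The coefficient q_i l_j of q(z) l(w), resp. l(z) q(w), is coordinate 3 i + j,
   resp. i + 3 j, of P^7. *)
Definition e_z (p : 'I_3 * 'I_2) : 'I_8 := inord (3 * p.1 + p.2).
Definition e_w (p : 'I_3 * 'I_2) : 'I_8 := inord (p.1 + 3 * p.2).

Lemma e_zE p : (e_z p %/ 3 = p.1 /\ e_z p %% 3 = p.2)%N.
Proof.
case: p => i j; move: (ltn_ord i) (ltn_ord j) => i_lt3 j_lt2.
by rewrite /e_z /= inordK; [split; lia | lia].
Qed.

Lemma e_wE p : (e_w p %% 3 = p.1 /\ e_w p %/ 3 = p.2)%N.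
Proof.
case: p => i j; move: (ltn_ord i) (ltn_ord j) => i_lt3 j_lt2.
by rewrite /e_w /= inordK; [split; lia | lia].
Qed.

Lemma e_z_inj : injective e_z.
Proof.
move=> p q pq; have [p1 p2] := e_zE p; have [q1 q2] := e_zE q.
by apply: injective_projections; apply: ord_inj; rewrite -?p1 -?p2 -?q1 -?q2 pq.
Qed.

Lemma e_w_inj : injective e_w.
Proof.
move=> p q pq; have [p1 p2] := e_wE p; have [q1 q2] := e_wE q.
by apply: injective_projections; apply: ord_inj; rewrite -?p1 -?p2 -?q1 -?q2 pq.
Qed.

Lemma X_zw_monom_e_z p : 'X_[zw_monom (e_z p)] = Z ^+ p.1 * W ^+ p.2.
Proof. by rewrite X_zw_monom; have [-> ->] := e_zE p. Qed.

Lemma X_zw_monom_e_w p : 'X_[zw_monom (e_w p)] = W ^+ p.1 * Z ^+ p.2.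
Proof. by rewrite X_zw_monom mulrC; have [-> ->] := e_wE p. Qed.

Lemma coef_vec_cubic_z a1 c1 a2 c2 b c :
  coef_vec ((a1 *: Z + c1%:MP) * (a2 *: Z + c2%:MP) * (b *: W + c%:MP)) =1
  segre e_z (quad_coefs a1 c1 a2 c2) (lin_coefs b c).
Proof.
rewrite quad_expand lin_expand mul_sum_powers.
under eq_bigr do rewrite -X_zw_monom_e_z.
exact: coef_vec_segre e_z_inj.
Qed.

Lemma coef_vec_cubic_w a1 c1 a2 c2 b c :
  coef_vec ((b *: Z + c%:MP) * (a1 *: W + c1%:MP) * (a2 *: W + c2%:MP)) =1
  segre e_w (quad_coefs a1 c1 a2 c2) (lin_coefs b c).
Proof.
rewrite -mulrA mulrC quad_expand lin_expand mul_sum_powers.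
under eq_bigr do rewrite -X_zw_monom_e_w.
exact: coef_vec_segre e_w_inj.
Qed.

End BinaryCubics.

Section ClosedField.
Variable F : closedFieldType.

Lemma split_quadratic (q0 q1 q2 : F) :
  exists a1 c1 a2 c2 : F, [/\ c1 * c2 = q0, a1 * c2 + c1 * a2 = q1 & a1 * a2 = q2].
Proof.
have [->|q2_neq0] := eqVneq q2 0.
  by exists q1, q0, 0, 1; split; rewrite ?mulr1 ?mulr0 ?addr0.
have [r] := solve_monicpoly (fun i => [:: - q0 / q2; - q1 / q2]`_i) (isT : (0 < 2)%N).
rewrite !big_ord_recr big_ord0 /= add0r expr0 expr1 mulr1 expr2 => r_root.
exists q2, (- q2 * r), 1, (q1 / q2 + r); split; rewrite ?mulr1 //.
- by rewrite mulrDr -[- q2 * r * r]mulrA r_root; field.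
- by field.
Qed.

Lemma quad_coefs_surj (x : 'I_3 -> F) : exists a1 c1 a2 c2, quad_coefs a1 c1 a2 c2 =1 x.
Proof.
have [a1 [c1 [a2 [c2 [x0 x1 x2]]]]] := split_quadratic (x ord0) (x (inord 1)) (x ord_max).
exists a1, c1, a2, c2; case=> [[|[|[|//]]] i_lt3] /=; rewrite /quad_coefs /=.
- by rewrite x0; congr x; apply: val_inj.
- by rewrite x1; congr x; apply: val_inj; rewrite /= inordK.
- by rewrite x2; congr x; apply: val_inj.
Qed.

Lemma cubic_family_segre (e : 'I_3 * 'I_2 -> 'I_8)
    (P : F -> F -> F -> F -> F -> F -> {mpoly F[2]}) :
  (forall a1 c1 a2 c2 b c, coef_vec (P a1 c1 a2 c2 b c) =1
     segre e (quad_coefs a1 c1 a2 c2) (lin_coefs b c)) ->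
  forall v, nonzero_vec v ->
  (exists a1 c1 a2 c2 b c, P a1 c1 a2 c2 b c != 0 /\ proj_eq (coef_vec (P a1 c1 a2 c2 b c)) v)
  <-> segre_image e v.
Proof.
move=> coefP v v_neq0; split.
  case=> [a1 [c1 [a2 [c2 [b [c [_ [l _ vl]]]]]]]].
  exists (fun i => l * quad_coefs a1 c1 a2 c2 i), (fun j => 1 * lin_coefs b c j) => k.
  by rewrite segre_scale mulr1 vl coefP.
case=> x [y vxy]; have [a1 [c1 [a2 [c2 x_quad]]]] := quad_coefs_surj x.
have coefE : coef_vec (P a1 c1 a2 c2 (y ord_max) (y ord0)) =1 v.
  by move=> k; rewrite coefP (eq_segre _ x_quad (lin_coefsE y)) vxy.
exists a1, c1, a2, c2, (y ord_max), (y ord0); split; last exact: eqfun_proj_eq.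
apply/eqP => P0; case: v_neq0 => k; by rewrite -coefE P0 /coef_vec mcoeff0 eqxx.
Qed.

Lemma D_11_0_1_segre (v : 'I_8 -> F) : nonzero_vec v -> D_11_0_1 v <-> segre_image e_z v.
Proof.
move=> v_neq0; apply: iff_trans (cubic_family_segre (coef_vec_cubic_z (F := F)) v_neq0).
exact: iff_refl.
Qed.

Lemma D_1_0_11_segre (v : 'I_8 -> F) : nonzero_vec v -> D_1_0_11 v <-> segre_image e_w v.
Proof.
move=> v_neq0; apply: iff_trans (cubic_family_segre (coef_vec_cubic_w (F := F)) v_neq0).
split=> [[a1 [c1 [b2 [c2 [b3 [c3 D]]]]]] | [a1 [c1 [a2 [c2 [b [c D]]]]]]].
  by exists b2, c2, b3, c3, a1, c1.
by exists b, c, a1, c1, a2, c2.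
Qed.

End ClosedField.

Theorem proposition5p3 (R : realType) :
  @biregular_to_P2P1 (complex R) 7 (@D_11_0_1 (complex R)) /\
  @biregular_to_P2P1 (complex R) 7 (@D_1_0_11 (complex R)).
Proof.
split; apply: biregular_segre.
- exact: e_z_inj.
- exact: D_11_0_1_segre.
- exact: e_w_inj.
- exact: D_1_0_11_segre.
Qed.
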